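(* Let $\lambda\ge 0$ be an integer. For one-sided matching with unrestricted (arbitrary nonnegative) valuations, the algorithm $\lambda$-TSF makes at most $1+\lambda+\lambda\log n$ value queries per agent and has distortion at most $2n^{1/(\lambda+1)}$.
   Context: One-sided matching: there is a set $N$ of $n$ agents and a set $A$ of $n$ items. Each agent $i$ has a valuation function $v_i:A\to\mathbb{R}_{\ge 0}$. A profile $\mathbf v$ induces an ordinal profile $\succ_{\mathbf v}$ of strict rankings consistent with the values (if $a\succ_i b$ then $v_i(a)\ge v_i(b)$). A matching $Y=(y_i)$ is a bijection $N\to A$, and $\mathrm{SW}(Y\mid\mathbf v)=\sum_i v_i(y_i)$. An algorithm receives $\succ_{\mathbf v}$ and may make value queries $(i,j)\mapsto v_i(j)$. Its distortion is $\sup_{\mathbf v}\max_Z\mathrm{SW}(Z\mid\mathbf v)/\mathrm{SW}(\text{output}\mid\mathbf v)$. Algorithm $\lambda$-TSF: let $\alpha_\ell=n^{-\ell/(\lambda+1)}$ for $\ell=0,\dots,\lambda$. For each agent $i$: - query $i$'s top-ranked item $j_i^*$ and let $v_i^*=v_i(j_i^* )$; - set $Q_{i,0}=\{j_i^*\}$ and $\tilde v_i(j_i^* )=v_i^*$; - for each $\ell=1,\dots,\lambda$, let $Q_{i,\ell}$ be the set of items $j\ne j_i^*$ with $v_i(j)\in[\alpha_\ell v_i^*,\alpha_{\ell-1}v_i^* )$ (for $\ell=1$ the upper endpoint $v_i^*$ is included). Since values are nonincreasing along $\succ_i$, each $Q_{i,\ell}$ is a contiguous segment of $i$'s ranking,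 and it is found by binary search over the ranking using value queries. Set $\tilde v_i(j)=\alpha_\ell v_i^*$ for $j\in Q_{i,\ell}$; - set $\tilde v_i(j)=0$ for items $j$ in no $Q_{i,\ell}$. The algorithm outputs a matching maximizing $\sum_i\tilde v_i(y_i)$. *)

From HB Require Import structures.
From mathcomp Require Import all_boot all_order all_algebra fingroup perm.
From mathcomp Require Import reals exp.
Set Implicit Arguments. Unset Strict Implicit. Unset Printing Implicit Defensive.
Import Order.TTheory GRing.Theory Num.Theory.
Local Open Scope ring_scope.

(* Number of agents = number of items = n.+1 (i.e. any n >= 1).
   Agents and items are both 'I_n.+1.  A matching is a permutation
   Y : {perm 'I_n.+1}, agent i gets item Y i.
   An ordinal profile is  rank : agent -> {perm 'I_n.+1}, where
   rank i k is the item in position k of agent i's ranking (position 0 = top). *)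

Section TSF.
Variable R : realType.
Variable n : nat.
Local Notation N := n.+1.
Local Notation item := 'I_N.
Local Notation agent := 'I_N.

Definition SW (v : agent -> item -> R) (Y : {perm agent}) : R :=
  \sum_(i : agent) v i (Y i).

Definition consistent (vi : item -> R) (rk : {perm item}) : Prop :=
  forall k k' : 'I_N, (k <= k')%N -> vi (rk k') <= vi (rk k).

Definition alpha (lam l : nat) : R :=
  powR (N%:R) (- (l%:R / (lam.+1)%:R)).

Definition inQ (lam : nat) (vi : item -> R) (jstar : item) (l : nat) (j : item)
  : bool :=
  let vs := vi jstar in
  [&& j != jstar, alpha lam l * vs <= vi j &
      (vi j < alpha lam l.-1 * vs) || ((l == 1)%N && (vi j <= vs))].

(* tilde v_i(j): vstar on jstar, alpha_l vstar on Q_{i,l} (first such l; the Q_{i,l}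
   are pairwise disjoint anyway), 0 elsewhere. *)
Definition tilde_spec (lam : nat) (vi : item -> R) (rk : {perm item})
  (j : item) : R :=
  let jstar := rk ord0 in
  let vs := vi jstar in
  if j == jstar then vs
  else foldr (fun l acc => if inQ lam vi jstar l j then alpha lam l * vs else acc)
             0 (iota 1 lam).

(* A program may ask for the value of an item (QAsk j k: query v_i(j), continue
   with k applied to the answer) or return a result. *)
Inductive qprog (A : Type) : Type :=
| QRet : A -> qprog A
| QAsk : item -> (R -> qprog A) -> qprog A.

Fixpoint qbind (A B : Type) (p : qprog A) (f : A -> qprog B) : qprog B :=
  match p with
  | QRet a => f a
  | QAsk j k => QAsk j (fun x => qbind (k x) f)
  end.

Fixpoint qrun (A : Type) (vi : item -> R) (p : qprog A) : A * nat :=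
  match p with
  | QRet a => (a, 0%N)
  | QAsk j k => let r := qrun vi (k (vi j)) in (r.1, r.2.+1)
  end.

Fixpoint bsearch (rk : {perm item}) (thr : R) (fuel lo hi : nat) : qprog nat :=
  match fuel with
  | 0%N => QRet lo
  | fuel'.+1 =>
      if (lo < hi)%N then
        let mid := ((lo + hi)./2)%N in
        QAsk (rk (inord mid))
          (fun x => if x < thr then bsearch rk thr fuel' lo mid
                    else bsearch rk thr fuel' mid.+1 hi)
      else QRet lo
  end.

(* Boundaries b_1, ..., b_lam (b_0 = 1): Q_{i,l} = positions [b_{l-1}, b_l). *)
Fixpoint levels (rk : {perm item}) (lam : nat) (vs : R) (l prev : nat)
  (cnt : nat) : qprog (seq nat) :=
  match cnt with
  | 0%N => QRet [::]
  | cnt'.+1 =>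
      qbind (bsearch rk (alpha lam l * vs) N prev N)
        (fun b => qbind (levels rk lam vs l.+1 b cnt')
                   (fun bs => QRet (b :: bs)))
  end.

Definition tsf_agent (rk : {perm item}) (lam : nat) : qprog (R * seq nat) :=
  QAsk (rk ord0) (fun vs =>
    qbind (levels rk lam vs 1 1 lam) (fun bs => QRet (vs, bs))).

Definition tilde_of_output (lam : nat) (rk : {perm item}) (out : R * seq nat)
  (j : item) : R :=
  let vs := out.1 in
  let bs := 1%N :: out.2 in
  let p := nat_of_ord ((rk^-1)%g j) in
  if p == 0%N then vs
  else foldr (fun l acc =>
                if (nth 0%N bs l.-1 <= p < nth 0%N bs l)%N
                then alpha lam l * vs else acc)
             0 (iota 1 lam).

End TSF.

Arguments SW {R n}.
Arguments consistent {R n}.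
Arguments alpha {R}.
Arguments inQ {R n}.
Arguments tilde_spec {R n}.
Arguments qrun {R n A}.
Arguments QRet {R n A}.
Arguments QAsk {R n A}.
Arguments qbind {R n A B}.
Arguments bsearch {R n}.
Arguments levels {R n}.
Arguments tsf_agent {R n}.
Arguments tilde_of_output {R n}.

From HB Require Import structures.
From mathcomp Require Import all_boot all_order all_algebra fingroup perm.
From mathcomp Require Import reals exp.
From mathcomp Require Import zify ring lra.
Import Order.TTheory GRing.Theory Num.Theory.
Local Open Scope ring_scope.

(* Binary search on a window of
   positions of length < 2^k makes at most k queries and returns the first
   position whose value falls below the threshold, provided "below the
   threshold" is upward closed along the ranking (which consistency of the
   ranking guarantees).  Chaining lam such searches finds the boundaries of the
   segments Q_{i,1}, ..., Q_{i,lam}; with k = floor(log2 N) + 1 this gives at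
   most 1 + lam (1 + log2 N) queries, and the boundaries determine exactly the
   approximate values tilde v_i.

   With c = N^(1/(lam+1)) we have c alpha_(l+1) = alpha_l and
   alpha_lam N = c.  Every value satisfies
   v_i(j) <= c tilde v_i(j) + alpha_lam v_i^*, and a tilde-optimal matching Y
   has v_i^* <= SW(Y) for each agent i (giving i its top item is feasible).
   Summing over a matching Z yields SW(Z) <= c SW(Y) + alpha_lam N SW(Y)
   = 2 c SW(Y). *)

Lemma qrun_bind (R : realType) n A B (vi : 'I_n.+1 -> R) (p : qprog R n A)
    (f : A -> qprog R n B) :
  qrun vi (qbind p f) = ((qrun vi (f (qrun vi p).1)).1,
                         ((qrun vi p).2 + (qrun vi (f (qrun vi p).1)).2)%N).
Proof.
elim: p => [a|j k IH] /=; first by case: (qrun _ _).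
by rewrite IH.
Qed.

Definition value_at {R : realType} {n : nat} (vi : 'I_n.+1 -> R)
    (rk : {perm 'I_n.+1}) (p : nat) : R :=
  vi (rk (inord p)).

Section BinarySearch.
Variables (R : realType) (n : nat) (vi : 'I_n.+1 -> R) (rk : {perm 'I_n.+1}).
Variable thr : R.

Local Notation below p := (value_at vi rk p < thr).

(* Each query at least halves the window, so a window shorter than 2^k costs
   at most k queries. *)
Lemma bsearch_queries fuel lo hi k :
  (hi - lo < 2 ^ k)%N -> ((qrun vi (bsearch rk thr fuel lo hi)).2 <= k)%N.
Proof.
elim: fuel lo hi k => [|fuel IH] lo hi k hk //=.
case: ifP => hlo //=.
case: k hk => [|k] hk; first by rewrite expn0 in hk; lia.
rewrite ltnS; case: ifP => _; apply: IH; rewrite expnS -divn2 in hk *;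
  set K := (2 ^ k)%N in hk *; lia.
Qed.

Lemma bsearch_correct fuel lo hi :
  (hi - lo <= fuel)%N -> (lo <= hi)%N ->
  (forall p q, (lo <= p <= q)%N -> (q < hi)%N -> below p -> below q) ->
  let b := (qrun vi (bsearch rk thr fuel lo hi)).1 in
  [/\ (lo <= b <= hi)%N, (forall p, (lo <= p < b)%N -> ~~ below p)
    & (forall p, (b <= p < hi)%N -> below p)].
Proof.
elim: fuel lo hi => [|fuel IH] lo hi hfuel hlohi hmono /=.
  by split=> [|p hp|p hp]; lia.
case: ifP => hlo /=; last by split=> [|p hp|p hp]; lia.
set mid := ((lo + hi)./2)%N.
have hmid : (lo <= mid < hi)%N by rewrite /mid -divn2; lia.
have hhalf : (mid - lo <= fuel /\ hi - mid.+1 <= fuel)%N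
  by rewrite /mid -divn2; lia.
case: ifP => hbelow.
- have [||p q hpq hq|] := IH lo mid; [lia|lia|apply: hmono; lia|].
  move=> hb hab hbel; split=> [|//|p hp]; first lia.
  case: (ltnP p mid) => hpm; first by apply: hbel; lia.
  by apply: (hmono mid) => //; lia.
- have [||p q hpq hq|] := IH mid.+1 hi; [lia|lia|apply: hmono; lia|].
  move=> hb hab hbel; split=> [|p hp|//]; first lia.
  case: (ltnP p mid.+1) => hpm; last by apply: hab; lia.
  by apply/negP => hp'; rewrite (hmono p mid) // in hbelow; lia.
Qed.

End BinarySearch.

Section Levels.
Variables (R : realType) (n lam : nat).
Variables (vi : 'I_n.+1 -> R) (rk : {perm 'I_n.+1}) (vs : R).

Lemma levels_queries k :
  (n.+1 < 2 ^ k)%N -> forall cnt l prev,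
  ((qrun vi (levels rk lam vs l prev cnt)).2 <= cnt * k)%N.
Proof.
move=> hk; elim=> [|cnt IH] l prev //.
have hsearch := @bsearch_queries R n vi rk (alpha n lam l * vs) n.+1 prev n.+1 k
  (ltac:(lia)).
rewrite /= !qrun_bind addn0 mulSn; exact: leq_add hsearch (IH _ _).
Qed.

Hypothesis value_mono :
  forall p q, (p <= q < n.+1)%N -> value_at vi rk q <= value_at vi rk p.
Hypothesis thr_mono : forall m, alpha n lam m.+1 * vs <= alpha n lam m * vs.

Lemma levels_correct cnt l prev :
  (1 <= prev <= n.+1)%N ->
  (forall p, (1 <= p < prev)%N -> alpha n lam l * vs <= value_at vi rk p) ->
  forall t, (t < cnt)%N -> forall p, (1 <= p < n.+1)%N ->
    (nth 0%N (qrun vi (levels rk lam vs l prev cnt)).1 t <= p)%N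
    = (value_at vi rk p < alpha n lam (l + t) * vs).
Proof.
elim: cnt l prev => [|cnt IH] l prev hprev habove //=.
rewrite !qrun_bind /=.
have [||p q hpq hq|] :=
  @bsearch_correct R n vi rk (alpha n lam l * vs) n.+1 prev n.+1; [lia|lia| |].
  by apply: le_lt_trans; apply: value_mono; lia.
set b := (qrun vi _).1 => hb hab hbel.
have habove' p : (1 <= p < b)%N -> alpha n lam l.+1 * vs <= value_at vi rk p.
  move=> hp; apply: le_trans (thr_mono l) _.
  case: (ltnP p prev) => hpp; first by apply: habove; lia.
  by rewrite leNgt; apply: hab; lia.
have hnth := IH l.+1 b (ltac:(lia)) habove'.
case=> [|t] ht p hp /=; last by rewrite hnth // addSnnS.
rewrite addn0; apply/idP/idP => hpb; first by apply: hbel; lia.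
case: (ltnP p prev) => hpp.
  by move: (habove p (ltac:(lia))); rewrite leNgt hpb.
by case: (ltnP p b) => // hpb'; move: (hab p (ltac:(lia))); rewrite hpb.
Qed.

End Levels.

Lemma trunc_log2_le (R : realType) m :
  (0 < m)%N -> ((trunc_log 2 m)%:R : R) <= ln m%:R / ln 2.
Proof.
move=> hm; have ln2 : (0 : R) < ln 2 by apply: ln_gt0; lra.
rewrite ler_pdivlMr // mulrC mulr_natr -lnXn; last lra.
rewrite ler_ln ?posrE ?exprn_gt0 ?ltr0n //.
by rewrite -natrX ler_nat; apply: trunc_logP.
Qed.

Section Thresholds.
Variables (R : realType) (n lam : nat).

(* The ratio N^(1/(lam+1)) between consecutive thresholds; it is the
   distortion factor up to the constant 2. *)
Definition ratio : R := powR (n.+1)%:R (1 / (lam.+1)%:R).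

Lemma ratio_ge1 : 1 <= ratio.
Proof.
rewrite /ratio -{1}(powRr0 (n.+1)%:R); apply: ler_powR; first by rewrite ler1n.
by rewrite divr_ge0.
Qed.

Lemma alpha_ge0 l : (0 : R) <= alpha n lam l.
Proof. exact: powR_ge0. Qed.

Lemma alpha0 : alpha (R:=R) n lam 0 = 1.
Proof. by rewrite /alpha mul0r oppr0 powRr0. Qed.

Lemma alpha_antitone m : alpha (R:=R) n lam m.+1 <= alpha n lam m.
Proof.
rewrite /alpha; apply: ler_powR; first by rewrite ler1n.
by rewrite lerN2 ler_wpM2r ?invr_ge0 ?ler0n // ler_nat.
Qed.

Lemma alpha_step l : ratio * alpha n lam l.+1 = alpha n lam l.
Proof.
rewrite /ratio /alpha -powRD; last by rewrite pnatr_eq0 implybT.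
congr powR; rewrite -[(l.+1)%:R]natr1 [(l%:R + 1)]addrC.
have hlam : ((lam.+1)%:R : R) != 0 by rewrite pnatr_eq0.
by field; rewrite // addrC natr1.
Qed.

Lemma alpha_last : alpha (R:=R) n lam lam * (n.+1)%:R = ratio.
Proof.
rewrite /ratio /alpha -{2}(powRr1 (ler0n _ n.+1)) -powRD;
  last by rewrite pnatr_eq0 implybT.
congr powR; rewrite -[(lam.+1)%:R]natr1.
have hlam : ((lam%:R + 1) : R) != 0 by rewrite natr1 pnatr_eq0.
by field.
Qed.

End Thresholds.

Arguments ratio {R}.

(* tilde_spec and tilde_of_output both select the first level of 1..lam whose
   test succeeds; these two facts describe such a "first match" fold. *)
Lemma first_match_ext (T : Type) (s : seq nat) (c1 c2 : nat -> bool)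
    (g : nat -> T) (d : T) :
  (forall l, l \in s -> c1 l = c2 l) ->
  foldr (fun l acc => if c1 l then g l else acc) d s =
  foldr (fun l acc => if c2 l then g l else acc) d s.
Proof.
elim: s => //= a s IH hc; rewrite hc ?mem_head // IH // => l hl.
by apply: hc; rewrite in_cons hl orbT.
Qed.

Lemma first_match_cases (T : Type) (s : seq nat) (c : nat -> bool)
    (g : nat -> T) (d : T) :
  let F := foldr (fun l acc => if c l then g l else acc) d s in
  (F = d /\ forall l, l \in s -> c l = false) \/
  (exists l, [/\ l \in s, c l & F = g l]).
Proof.
elim: s => [|a s IH] /=; first by left.
case: ifP => ha; first by right; exists a; rewrite mem_head.
case: IH => [[-> hno]|[l [hl hcl ->]]]; last first.
  by right; exists l; rewrite in_cons hl orbT.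
left; split=> // l; rewrite in_cons => /orP[/eqP -> //|]; exact: hno.
Qed.

Section Agent.
Variables (R : realType) (n lam : nat).
Variables (vi : 'I_n.+1 -> R) (rk : {perm 'I_n.+1}).
Hypothesis vi_ge0 : forall j, 0 <= vi j.
Hypothesis vi_consistent : consistent vi rk.

Local Notation vs := (vi (rk ord0)).
Local Notation bounds := (qrun vi (levels rk lam vs 1 1 lam)).

Lemma value_at_mono p q :
  (p <= q < n.+1)%N -> value_at vi rk q <= value_at vi rk p.
Proof. by move=> hpq; apply: vi_consistent => /=; rewrite !inordK; lia. Qed.

Lemma value_at_val (j : 'I_n.+1) : value_at vi rk ((rk^-1)%g j) = vi j.
Proof. by rewrite /value_at inord_val permKV. Qed.

Lemma value_at0 : value_at vi rk 0 = vs.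
Proof.
by rewrite /value_at; congr (vi (rk _)); apply: val_inj; rewrite /= inordK.
Qed.

Lemma le_top j : vi j <= vs.
Proof.
by rewrite -value_at_val -value_at0; apply: value_at_mono; rewrite /= ltn_ord.
Qed.

Lemma tsf_agent_run :
  qrun vi (tsf_agent rk lam) = ((vs, bounds.1), bounds.2.+1).
Proof. by rewrite /tsf_agent /= qrun_bind addn0. Qed.

(* One query for the top item plus lam searches of floor(log2 N) + 1 queries. *)
Lemma tsf_agent_queries :
  (((qrun vi (tsf_agent rk lam)).2)%:R : R)
  <= 1 + lam%:R + lam%:R * (ln (n.+1)%:R / ln 2).
Proof.
set k := (trunc_log 2 n.+1).+1.
have hcount : (bounds.2 <= lam * k)%N.
  by apply: levels_queries; apply: trunc_log_ltn.
have hlog := @trunc_log2_le R n.+1 isT.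
rewrite tsf_agent_run /=; apply: (@le_trans _ _ ((1 + lam * k)%N)%:R).
  by rewrite ler_nat; lia.
rewrite natrD natrM /k -natr1.
by have := ler_wpM2l (ler0n R lam) hlog; lra.
Qed.

Lemma bounds_spec t p : (t < lam)%N -> (1 <= p < n.+1)%N ->
  (nth 0%N bounds.1 t <= p)%N = (value_at vi rk p < alpha n lam t.+1 * vs).
Proof.
have thr_mono m : alpha n lam m.+1 * vs <= alpha n lam m * vs.
  by apply: ler_wpM2r => //; apply: alpha_antitone.
move=> ht hp.
apply: (@levels_correct R n lam vi rk vs value_at_mono thr_mono) => //.
by move=> q hq; lia.
Qed.

Lemma tsf_agent_correct j :
  tilde_of_output lam rk (qrun vi (tsf_agent rk lam)).1 j
  = tilde_spec lam vi rk j.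
Proof.
rewrite tsf_agent_run /tilde_of_output /tilde_spec /=.
set p := nat_of_ord ((rk^-1)%g j).
have hpj : value_at vi rk p = vi j by apply: value_at_val.
have [hp0|hp0] := eqVneq p 0%N.
  have -> : j = rk ord0.
    by rewrite -[j](permKV rk); congr (rk _); apply: val_inj.
  by rewrite eqxx.
have hjtop : (j == rk ord0) = false.
  by apply/eqP => e; move: hp0; rewrite /p e permK.
rewrite hjtop; apply: first_match_ext => -[|l]; rewrite mem_iota //.
move=> hl; have hp : (0 < p < n.+1)%N by rewrite lt0n hp0 /= ltn_ord.
rewrite /inQ hjtop /= ltnNge (bounds_spec l) // hpj -leNgt andbC.
case: l hl => [|l] hl /=; first by rewrite le_top orbT lt0n hp0 !andbT.
by rewrite (bounds_spec l) ?hpj ?orbF //; lia.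
Qed.

Let tilde_cases (j : 'I_n.+1) := @first_match_cases R (iota 1 lam)
  (fun l => inQ lam vi (rk ord0) l j) (fun l => alpha n lam l * vs) 0.

Lemma tilde_top : tilde_spec lam vi rk (rk ord0) = vs.
Proof. by rewrite /tilde_spec eqxx. Qed.

Lemma tilde_ge0 j : 0 <= tilde_spec lam vi rk j.
Proof.
rewrite /tilde_spec; case: ifP => // _.
case: (tilde_cases j) => [[-> _] //|[l [_ _ ->]]].
by rewrite mulr_ge0 // alpha_ge0.
Qed.

Lemma tilde_le j : tilde_spec lam vi rk j <= vi j.
Proof.
rewrite /tilde_spec; case: ifP => [/eqP -> //|_].
case: (tilde_cases j) => [[-> _] //|[l [_ hq ->]]].
by case/and3P: hq.
Qed.

Lemma below_all_levels {j} : j != rk ord0 ->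
  (forall l, l \in iota 1 lam -> inQ lam vi (rk ord0) l j = false) ->
  forall m, (m < lam)%N -> vi j < alpha n lam m.+1 * vs.
Proof.
move=> hjtop hnone; elim=> [|m IH] hm; rewrite ltNge; apply/negP => hge.
  have hin : 1%N \in iota 1 lam by rewrite mem_iota; lia.
  by move: (hnone _ hin); rewrite /inQ hjtop hge le_top orbT.
have hin : m.+2 \in iota 1 lam by rewrite mem_iota; lia.
by move: (hnone _ hin); rewrite /inQ hjtop hge IH // ltnW.
Qed.

(* The approximation guarantee: rounding down loses at most a factor ratio on
   the items of some segment, and everything else is worth < alpha_lam vs. *)
Lemma value_le_tilde j :
  vi j <= ratio n lam * tilde_spec lam vi rk j + alpha n lam lam * vs.
Proof.
have hvs : 0 <= vs by [].
have hlast : 0 <= alpha n lam lam * vs by rewrite mulr_ge0 // alpha_ge0.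
have hratio := ratio_ge1 R n lam.
rewrite /tilde_spec; case: ifP => [/eqP ->|/negbT hjtop]; first by nra.
case: (tilde_cases j) => [[-> hnone]|[[|l] [hl hq ->]]].
- rewrite mulr0 add0r; have [->|lam_gt0] := posnP lam.
    by rewrite alpha0 mul1r le_top.
  have hlt : (lam.-1 < lam)%N by rewrite prednK.
  by move: (below_all_levels hjtop hnone _ hlt); rewrite prednK // => /ltW.
- by rewrite mem_iota in hl.
- rewrite mulrA alpha_step; apply: ler_wpDr => //.
  case/and3P: hq => _ _ /orP[/ltW //|/andP[/eqP hl1 hle]].
  by case: l hl1 {hl} => // _; rewrite alpha0 mul1r.
Qed.

End Agent.

Section Distortion.
Variables (R : realType) (n lam : nat).
Variables (v : 'I_n.+1 -> 'I_n.+1 -> R) (rank : 'I_n.+1 -> {perm 'I_n.+1}).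
Hypothesis v_ge0 : forall i j, 0 <= v i j.
Hypothesis v_consistent : forall i, consistent (v i) (rank i).

Local Notation tilde i := (tilde_spec lam (v i) (rank i)).
Local Notation top i := (rank i ord0).

Lemma approx_welfare_le (Y : {perm 'I_n.+1}) :
  \sum_i tilde i (Y i) <= SW v Y.
Proof. by apply: ler_sum => i _; apply: tilde_le. Qed.

Lemma welfare_le_approx (Z : {perm 'I_n.+1}) :
  SW v Z <= ratio n lam * \sum_i tilde i (Z i)
            + alpha n lam lam * \sum_i v i (top i).
Proof.
rewrite /SW !mulr_sumr -big_split /=; apply: ler_sum => i _.
exact: value_le_tilde.
Qed.

Variable Y : {perm 'I_n.+1}.
Hypothesis Y_opt : forall Y' : {perm 'I_n.+1},
  \sum_i tilde i (Y' i) <= \sum_i tilde i (Y i).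

(* Giving agent i its top item is feasible, so the optimum is worth at least
   tilde v_i(top i) = v_i^*. *)
Lemma top_le_welfare i : v i (top i) <= SW v Y.
Proof.
apply: le_trans (approx_welfare_le Y).
apply: le_trans (Y_opt (tperm i (top i))).
rewrite (bigD1 i) //= tpermL tilde_top; apply: ler_wpDr => //.
by apply: sumr_ge0 => k _; apply: tilde_ge0.
Qed.

Lemma tsf_distortion (Z : {perm 'I_n.+1}) :
  SW v Z <= 2 * ratio n lam * SW v Y.
Proof.
have tops_le : \sum_i v i (top i) <= (n.+1)%:R * SW v Y.
  rewrite mulr_natl -[in X in _ <= X](card_ord n.+1) -sumr_const.
  by apply: ler_sum => i _; apply: top_le_welfare.
have hratio : 0 <= ratio (R:=R) n lam by rewrite /ratio powR_ge0.
have happrox := ler_wpM2l hratio (le_trans (Y_opt Z) (approx_welfare_le Y)).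
have htops := ler_wpM2l (alpha_ge0 R n lam lam) tops_le.
rewrite mulrA alpha_last in htops.
by apply: le_trans (welfare_le_approx Z) _; lra.
Qed.

End Distortion.

Theorem theorem2 (R : realType) (n lam : nat)
    (v : 'I_n.+1 -> 'I_n.+1 -> R) (rank : 'I_n.+1 -> {perm 'I_n.+1}) :
  (forall i j, 0 <= v i j) ->
  (forall i, consistent (v i) (rank i)) ->
  (* query complexity, and the queried procedure computes exactly tilde v_i *)
  (forall i : 'I_n.+1,
     let r := qrun (v i) (tsf_agent (rank i) lam) in
     ((r.2)%:R : R) <= 1 + lam%:R + lam%:R * (ln (n.+1)%:R / ln 2)
     /\ (forall j, tilde_of_output lam (rank i) r.1 j
                   = tilde_spec lam (v i) (rank i) j)) /\
  (* distortion: any matching maximizing sum_i tilde v_i(y_i) *)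
  (forall Y : {perm 'I_n.+1},
     (forall Y' : {perm 'I_n.+1},
        \sum_i tilde_spec lam (v i) (rank i) (Y' i)
        <= \sum_i tilde_spec lam (v i) (rank i) (Y i)) ->
     forall Z : {perm 'I_n.+1},
       SW v Z <= 2 * powR (n.+1)%:R (1 / (lam.+1)%:R) * SW v Y).
Proof.
move=> v_ge0 v_consistent; split=> [i|Y Y_opt Z].
  split; first exact: tsf_agent_queries.
  exact: tsf_agent_correct (v_ge0 i) (v_consistent i).
exact: tsf_distortion v_ge0 v_consistent Y Y_opt Z.
Qed.
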